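(* Let $n\ge1$ and $B,B'\in\mathrm{GL}_n(\mathbb{R})$. Then $\ker L^\Psi_B=\operatorname{Im}L^\Phi_B$ if and only if $\ker L^\Psi_{B'}=\operatorname{Im}L^\Phi_{B'}$.
   Context: $\mathcal{S}^r(\mathbb{R}^n)$ denotes symmetric $r$-linear maps $(\mathbb{R}^n)^r\to\mathbb{R}^n$; $\langle\cdot,\cdot\rangle$ is the Euclidean inner product. For $v\in\mathbb{R}^n$, $Q_v(\xi,\eta)=\langle\xi,\eta\rangle v-\langle\xi,v\rangle\eta-\langle\eta,v\rangle\xi$. For $Q\in\mathcal{S}^2(\mathbb{R}^n)$ and matrices $A,C$: $Q\circ(A,C)(\xi,\eta)=Q(A\xi,C\eta)$, $A\circ Q(\xi,\eta)=A(Q(\xi,\eta))$. For $Q,Q'\in\mathcal{S}^2(\mathbb{R}^n)$, $[Q,Q'](\xi,\eta,\theta)=\{Q(\xi,Q'(\eta,\theta))+Q(\eta,Q'(\theta,\xi))+Q(\theta,Q'(\xi,\eta))\}-\{Q'(\xi,Q(\eta,\theta))+Q'(\eta,Q(\theta,\xi))+Q'(\theta,Q(\xi,\eta))\}$. For $B=(v_1,\dots,v_n)\in\mathrm{GL}_n(\mathbb{R})$ (columns), $L^\Phi_B:M_n(\mathbb{R})^2\to\mathcal{S}^2(\mathbb{R}^n)^n$ is $L^\Phi_B(A',B'')=(A'\circ Q_{v_i}-Q_{v_i}\circ(A',I)-Q_{v_i}\circ(I,A')+Q_{\omega_i})_{1\le i\le n}$ where $B''=(\omega_1,\dots,\omega_n)$,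 and $L^\Psi_B:\mathcal{S}^2(\mathbb{R}^n)^n\to\mathcal{S}^3(\mathbb{R}^n)^{n(n-1)/2}$ is $L^\Psi_B(q_1,\dots,q_n)=([q_i,Q_{v_j}]-[q_j,Q_{v_i}])_{1\le i<j\le n}$. *)

From HB Require Import structures.
From mathcomp Require Import all_boot all_order all_algebra.
From mathcomp Require Import reals.
Set Implicit Arguments. Unset Strict Implicit. Unset Printing Implicit Defensive.
Import Order.TTheory GRing.Theory Num.Theory.
Local Open Scope ring_scope.

Section Defs.
Variables (R : realType) (n : nat).

Definition dotv (x y : 'cV[R]_n) : R := \sum_(k < n) x k 0 * y k 0.

Definition map2 := 'cV[R]_n -> 'cV[R]_n -> 'cV[R]_n.
Definition map3 := 'cV[R]_n -> 'cV[R]_n -> 'cV[R]_n -> 'cV[R]_n.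

Definition is_sym2 (q : map2) : Prop :=
  (forall x y, q x y = q y x) /\
  (forall (a : R) x y z, q (a *: x + y) z = a *: q x z + q y z).

Definition Qv (v : 'cV[R]_n) : map2 :=
  fun x y => dotv x y *: v - dotv x v *: y - dotv y v *: x.

Definition bracket (Q Q' : map2) : map3 :=
  fun x y z =>
    (Q x (Q' y z) + Q y (Q' z x) + Q z (Q' x y))
  - (Q' x (Q y z) + Q' y (Q z x) + Q' z (Q x y)).

(* i-th component of L^Phi_B(A',B''); v_i, omega_i are the i-th columns *)
Definition LPhi (B A' B'' : 'M[R]_n) (i : 'I_n) : map2 :=
  fun x y =>
    A' *m Qv (col i B) x y - Qv (col i B) (A' *m x) y
    - Qv (col i B) x (A' *m y) + Qv (col i B'') x y.

Definition LPsi (B : 'M[R]_n) (q : 'I_n -> map2) (i j : 'I_n) : map3 :=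
  fun x y z => bracket (q i) (Qv (col j B)) x y z
             - bracket (q j) (Qv (col i B)) x y z.

Definition ker_eq_im (B : 'M[R]_n) : Prop :=
  forall q : 'I_n -> map2, (forall i, is_sym2 (q i)) ->
    ((forall i j : 'I_n, (i < j)%N -> forall x y z, LPsi B q i j x y z = 0)
     <-> exists A' B'' : 'M[R]_n, forall i x y, q i x y = LPhi B A' B'' i x y).

End Defs.

(* The operators are equivariant under a change of basis: if C is invertible
   and q is recombined by C, i.e. (q C)_i = sum_l C_li q_l, then
   L^Psi_{BC}(q C) is a bilinear recombination of the components of L^Psi_B(q)
   (and the antisymmetry of L^Psi in (i,j) makes "vanishing for i<j" equivalent
   to vanishing for all i,j), while L^Phi_{BC}(A', B''C) = L^Phi_B(A', B'') C.
   Hence q |-> q C maps ker L^Psi_B onto ker L^Psi_{BC} and Im L^Phi_B onto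
   Im L^Phi_{BC}, and any B' is B (B^-1 B'). *)
From HB Require Import structures.
From mathcomp Require Import all_boot all_order all_algebra.
From mathcomp Require Import reals.
From mathcomp Require Import ring.
From Stdlib Require Import FunctionalExtensionality.
Set Implicit Arguments. Unset Strict Implicit. Unset Printing Implicit Defensive.
Import Order.TTheory GRing.Theory Num.Theory.
Local Open Scope ring_scope.

Lemma linear_fun_sum (R : pzRingType) (I : finType) (V W : lmodType R) (f : V -> W)
    (f_lin : forall a u v, f (a *: u + v) = a *: f u + f v)
    (c : I -> R) (w : I -> V) :
  f (\sum_k c k *: w k) = \sum_k c k *: f (w k).
Proof.
have f0 : f 0 = 0.
  have := f_lin 1 0 0; rewrite !scale1r addr0 => f00.
  by apply: (addrI (f 0)); rewrite addr0 -f00.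
apply: (big_ind2 (fun a b => f a = b)) => [//|u u' v v' <- <-|k _].
- by rewrite -[u]scale1r f_lin !scale1r.
- by rewrite -[_ *: _]addr0 f_lin f0 addr0.
Qed.

Section ChangeOfBasis.
Variables (R : realType) (n : nat).
Implicit Types (v w x y z : 'cV[R]_n) (B C D : 'M[R]_n) (q : 'I_n -> map2 R n).

Lemma dotvC x y : dotv x y = dotv y x.
Proof. by apply: eq_bigr => k _; rewrite mulrC. Qed.

Lemma dotv_linear_r a x y z : dotv x (a *: y + z) = a * dotv x y + dotv x z.
Proof.
rewrite /dotv mulr_sumr -big_split; apply: eq_bigr => k _.
by rewrite !mxE mulrDr mulrCA.
Qed.

Lemma dotv_linear_l a x y z : dotv (a *: x + y) z = a * dotv x z + dotv y z.
Proof. by rewrite dotvC dotv_linear_r !(dotvC z). Qed.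

Lemma Qv_sym2 v : is_sym2 (Qv v).
Proof.
split=> [x y|a x y z]; rewrite /Qv; last rewrite !dotv_linear_l.
  by rewrite dotvC; apply/matrixP => r c; rewrite !mxE; ring.
by apply/matrixP => r c; rewrite !mxE; ring.
Qed.

Lemma Qv_linear a v w x y : Qv (a *: v + w) x y = a *: Qv v x y + Qv w x y.
Proof. by rewrite /Qv !dotv_linear_r; apply/matrixP => r c; rewrite !mxE; ring. Qed.

Lemma sym2_linear_r (p : map2 R n) : is_sym2 p ->
  forall x a y z, p x (a *: y + z) = a *: p x y + p x z.
Proof. by case=> p_sym p_lin x a y z; rewrite p_sym p_lin !(p_sym _ x). Qed.

Lemma col_mulmx B C j : col j (B *m C) = \sum_k C k j *: col k B.
Proof.
apply/matrixP => r c; rewrite !mxE summxE; apply: eq_bigr => k _.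
by rewrite !mxE mulrC.
Qed.

Lemma Qv_col_mulmx B C j x y :
  Qv (col j (B *m C)) x y = \sum_k C k j *: Qv (col k B) x y.
Proof.
by rewrite col_mulmx (linear_fun_sum (f := fun v => Qv v x y) (fun a u v => Qv_linear a u v x y)).
Qed.

Lemma bracket_sum (P P' : 'I_n -> map2 R n) (c d : 'I_n -> R) :
    (forall l, is_sym2 (P l)) -> (forall k, is_sym2 (P' k)) -> forall x y z,
  bracket (fun a b => \sum_l c l *: P l a b) (fun a b => \sum_k d k *: P' k a b) x y z
  = \sum_l \sum_k (c l * d k) *: bracket (P l) (P' k) x y z.
Proof.
move=> P_sym P'_sym x y z.
have expand_PP' a b e : \sum_l c l *: P l a (\sum_k d k *: P' k b e)
    = \sum_l \sum_k (c l * d k) *: P l a (P' k b e).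
  apply: eq_bigr => l _; rewrite (linear_fun_sum (sym2_linear_r (P_sym l) a)) scaler_sumr.
  by apply: eq_bigr => k _; rewrite scalerA.
have expand_P'P a b e : \sum_k d k *: P' k a (\sum_l c l *: P l b e)
    = \sum_l \sum_k (c l * d k) *: P' k a (P l b e).
  rewrite exchange_big; apply: eq_bigr => k _.
  rewrite (linear_fun_sum (sym2_linear_r (P'_sym k) a)) scaler_sumr.
  by apply: eq_bigr => l _; rewrite scalerA mulrC.
rewrite /bracket /= !expand_PP' !expand_P'P.
under eq_bigr => l _ do under eq_bigr => k _ do rewrite scalerBr !scalerDr.
under eq_bigr => l _ do rewrite sumrB !big_split.
by rewrite sumrB !big_split.
Qed.

Definition comb C q : 'I_n -> map2 R n := fun i x y => \sum_l C l i *: q l x y.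

Lemma comb_sym2 C q : (forall i, is_sym2 (q i)) -> forall i, is_sym2 (comb C q i).
Proof.
move=> q_sym i; split=> [x y|a x y z]; rewrite /comb.
  by apply: eq_bigr => l _; rewrite (proj1 (q_sym l)).
rewrite scaler_sumr -big_split; apply: eq_bigr => l _.
by rewrite (proj2 (q_sym l)) scalerDr !scalerA mulrC.
Qed.

Lemma comb_mulmx C D q : comb C (comb D q) = comb (D *m C) q.
Proof.
do 3!apply: functional_extensionality => ?; rewrite /comb.
under eq_bigr => l _ do rewrite scaler_sumr.
rewrite exchange_big; apply: eq_bigr => m _.
rewrite mxE scaler_suml; apply: eq_bigr => l _.
by rewrite scalerA mulrC.
Qed.

Lemma comb1 q : comb 1%:M q = q.
Proof.
apply: functional_extensionality => i.
do 2!apply: functional_extensionality => ?.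
rewrite /comb (bigD1 i) //= big1 ?addr0.
  by rewrite mxE eqxx scale1r.
by move=> l /negbTE l_neq; rewrite mxE l_neq scale0r.
Qed.

Lemma LPsi_comb B C q i j x y z : (forall i, is_sym2 (q i)) ->
  LPsi (B *m C) (comb C q) i j x y z
  = \sum_l \sum_k (C l i * C k j) *: LPsi B q l k x y z.
Proof.
move=> q_sym.
have Qv_colE k : Qv (col k (B *m C)) = fun a b => \sum_l C l k *: Qv (col l B) a b.
  by do 2!apply: functional_extensionality => ?; apply: Qv_col_mulmx.
have Qv_sym k : is_sym2 (Qv (col k B)) by apply: Qv_sym2.
rewrite /LPsi !Qv_colE !(bracket_sum _ _ q_sym Qv_sym).
rewrite [X in _ - X = _]exchange_big -sumrB; apply: eq_bigr => l _.
rewrite -sumrB; apply: eq_bigr => k _.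
by rewrite [RHS]scalerBr [C k j * _]mulrC.
Qed.

Lemma LPhi_comb B C A' B'' i x y :
  LPhi (B *m C) A' (B'' *m C) i x y = \sum_l C l i *: LPhi B A' B'' l x y.
Proof.
rewrite /LPhi !Qv_col_mulmx mulmx_sumr.
under eq_bigr => k _ do rewrite -scalemxAr.
under [RHS]eq_bigr => k _ do rewrite scalerDr 2!scalerBr.
by rewrite big_split /= !sumrB.
Qed.

Definition in_ker_LPsi B q :=
  forall i j : 'I_n, (i < j)%N -> forall x y z, LPsi B q i j x y z = 0.

Definition in_im_LPhi B q :=
  exists A' B'' : 'M[R]_n, forall i x y, q i x y = LPhi B A' B'' i x y.

Lemma in_ker_LPsi_all B q : in_ker_LPsi B q -> forall l k x y z, LPsi B q l k x y z = 0.
Proof.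
move=> q_ker l k x y z; case: (ltngtP l k) => [lt_lk|lt_kl|/val_inj ->].
- exact: q_ker.
- by move: (q_ker _ _ lt_kl x y z); rewrite /LPsi => /eqP; rewrite -oppr_eq0 opprB => /eqP.
- by rewrite /LPsi subrr.
Qed.

Lemma in_ker_LPsi_comb B C q : (forall i, is_sym2 (q i)) ->
  in_ker_LPsi B q -> in_ker_LPsi (B *m C) (comb C q).
Proof.
move=> q_sym q_ker i j _ x y z; rewrite LPsi_comb //.
by apply: big1 => l _; apply: big1 => k _; rewrite in_ker_LPsi_all // scaler0.
Qed.

Lemma in_im_LPhi_comb B C q : in_im_LPhi B q -> in_im_LPhi (B *m C) (comb C q).
Proof.
case=> A' [B'' qE]; exists A', (B'' *m C) => i x y.
by rewrite LPhi_comb; apply: eq_bigr => l _; rewrite qE.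
Qed.

Lemma ker_eq_im_mulmx B C : C \in unitmx -> ker_eq_im B -> ker_eq_im (B *m C).
Proof.
move=> C_unit B_ker_im q q_sym.
have BCCiE : B *m C *m invmx C = B by rewrite -mulmxA mulmxV // mulmx1.
have qE : q = comb C (comb (invmx C) q) by rewrite comb_mulmx mulVmx // comb1.
have /B_ker_im ker_im := comb_sym2 (invmx C) q_sym.
split=> [q_ker | q_im]; rewrite qE.
- apply/in_im_LPhi_comb/ker_im; rewrite -BCCiE.
  exact: in_ker_LPsi_comb.
- apply/in_ker_LPsi_comb; first exact: comb_sym2.
  by apply/ker_im; rewrite -BCCiE; apply: in_im_LPhi_comb.
Qed.

End ChangeOfBasis.

Theorem lemma2p11 (R : realType) (n : nat) (hn : (1 <= n)%N)
  (B B' : 'M[R]_n) (hB : B \in unitmx) (hB' : B' \in unitmx) :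
  ker_eq_im B <-> ker_eq_im B'.
Proof.
have transfer (X Y : 'M[R]_n) :
    X \in unitmx -> Y \in unitmx -> ker_eq_im X -> ker_eq_im Y.
  move=> X_unit Y_unit; have -> : Y = X *m (invmx X *m Y).
    by rewrite mulmxA mulmxV // mul1mx.
  by apply: ker_eq_im_mulmx; rewrite unitmx_mul unitmx_inv X_unit.
by split; apply: transfer.
Qed.
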